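(* For every integer $n\ge 3$, the crown graph of order $2n$ admits an optimal extended irregular dominating set.
   Context: For $n\ge3$, the crown graph of order $2n$ is $K_{n,n}$ with parts $\{a_1,\dots,a_n\}$, $\{b_1,\dots,b_n\}$ minus the perfect matching $\{\{a_i,b_i\}: 1\le i\le n\}$. In a finite simple graph $\Gamma=(V,E)$ with distance $d$, a vertex $v$ carrying a non-negative integer label $\ell$ dominates (covers) exactly the vertices $u$ with $d(u,v)=\ell$; a vertex labeled $0$ dominates only itself. For $k\ge 0$, a $k$-extended irregular dominating set is a set $S\subseteq V$ of $k$ vertices with a labeling $\lambda:S\to\mathbb{Z}_{\ge0}$ with distinct labels, such that every vertex of $V$ is dominated by some vertex of $S$; it is assumed that some vertex of $S$ has label $0$. $\gamma_e(\Gamma)$ is the minimum cardinality of such a set, and a $k$-extended irregular dominating set is optimal if $k=\gamma_e(\Gamma)$. *)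

From mathcomp Require Import all_boot.
Set Implicit Arguments. Unset Strict Implicit. Unset Printing Implicit Defensive.

Definition walk_len (T : finType) (e : rel T) (u v : T) (k : nat) : Prop :=
  exists p : seq T, [/\ size p = k, path e u p & last u p = v].

Definition dist_eq (T : finType) (e : rel T) (u v : T) (l : nat) : Prop :=
  walk_len e u v l /\ forall m, m < l -> ~ walk_len e u v m.

Definition dominates (T : finType) (e : rel T) (v : T) (l : nat) (u : T) : Prop :=
  dist_eq e u v l.

Definition ext_irr_dom (T : finType) (e : rel T) (S : {set T}) (lam : T -> nat) : Prop :=
  [/\ {in S &, injective lam},
      exists2 v, v \in S & lam v = 0
    & forall u : T, exists2 v, v \in S & dominates e v (lam v) u].

Definition optimal_ext_irr_dom (T : finType) (e : rel T) (S : {set T}) (lam : T -> nat) : Prop :=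
  ext_irr_dom e S lam /\
  forall (S' : {set T}) (lam' : T -> nat), ext_irr_dom e S' lam' -> #|S| <= #|S'|.

(* Crown graph of order 2n: vertices inl i = a_i, inr j = b_j;
   a_i ~ b_j iff i <> j. *)
Definition crown_vertex (n : nat) : finType := ('I_n + 'I_n)%type.

Definition crown_adj (n : nat) : rel (crown_vertex n) :=
  fun x y => match x, y with
             | inl i, inr j => i != j
             | inr j, inl i => i != j
             | _, _ => false
             end.

From mathcomp Require Import all_boot zify.
Set Implicit Arguments. Unset Strict Implicit. Unset Printing Implicit Defensive.

(* In the crown graph with n >= 3, the vertices at distance 0, 1, 2, 3 from v
   are v itself, the n - 1 non-antipodal vertices of the other side, the n - 1
   other vertices of v's side, and the antipode of v (a_i <-> b_i).  So a vertex
   labelled 1 or 2 dominates n - 1 vertices and any other vertex at most one.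
   Labels being distinct, covering all 2n vertices forces
   2n <= 2(n - 1) + (|S| - 2), i.e. |S| >= 4.  Conversely a_0, b_0, b_1, a_1
   labelled 0, 1, 2, 3 dominate a_0, the a_i with i <> 0, the b_j with j <> 1,
   and b_1. *)

Lemma dist_eq_iff (T : finType) (e : rel T) (d : T -> T -> nat) (u v : T) :
    walk_len e u v (d u v) -> (forall m, walk_len e u v m -> d u v <= m) ->
  forall l, dist_eq e u v l <-> d u v = l.
Proof.
move=> walk_d d_min l; split.
- case=> walk_l no_shorter; apply/eqP; rewrite eqn_leq d_min //= leqNgt.
  by apply/negP => lt_l; exact: no_shorter _ lt_l walk_d.
- by move=> <-; split=> // m lt_m /d_min; rewrite leqNgt lt_m.
Qed.

Lemma card_le_sum_cover (I T : finType) (S : {set I}) (R : I -> pred T) :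
    (forall u, exists2 v, v \in S & R v u) ->
  #|T| <= \sum_(v in S) \sum_(u : T) (R v u : nat).
Proof.
move=> cover; rewrite exchange_big -sum1_card /= leq_sum // => u _.
by have [v vS Rvu] := cover u; rewrite (bigD1 v) //= Rvu leq_addr.
Qed.

Lemma sum_labels_in_le (T : finType) (U : eqType) (S : {set T}) (lam : T -> U)
    (s : seq U) :
  {in S &, injective lam} -> \sum_(v in S) (lam v \in s : nat) <= size s.
Proof.
move=> lam_inj.
rewrite (eq_bigr (fun v => if lam v \in s then 1 else 0)) => [|v _]; last first.
  by case: (lam v \in s).
rewrite -big_mkcondr sum1dep_card cardE -(size_map lam); apply: uniq_leq_size.
  rewrite map_inj_in_uniq ?enum_uniq // => x y.
  by rewrite !mem_enum !inE => /andP[xS _] /andP[yS _]; exact: lam_inj.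
by move=> _ /mapP[x + ->]; rewrite mem_enum inE => /andP[].
Qed.

Lemma exists_neq2 (T : finType) (x y : T) : 2 < #|T| ->
  exists z : T, (z != x) && (z != y).
Proof.
move=> T_gt2; have : 0 < #|~: [set x; y]|.
  by rewrite cardsCs setCK; have := cards2 x y; have := leq_b1 (x != y); lia.
by rewrite card_gt0 => /set0Pn[z]; rewrite !inE negb_or; exists z.
Qed.

Lemma sum_ord_if_eq (n : nat) (i : 'I_n) (a b l : nat) :
  \sum_(j < n) ((if j == i then a else b) == l : nat) = (a == l) + n.-1 * (b == l).
Proof.
rewrite (bigD1 i) //= eqxx (eq_bigr (fun=> (b == l : nat))) => [|j /negPf -> //].
by rewrite sum_nat_const cardC1 card_ord.
Qed.

Section Crown.
Variable n : nat.
Local Notation T := (crown_vertex n).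
Local Notation e := (@crown_adj n).

(* The graph distance only for n >= 3 (for n = 1, 2 the crown graph is
   disconnected). *)
Definition crown_dist (x y : T) : nat :=
  match x, y with
  | inl i, inl j | inr i, inr j => if i == j then 0 else 2
  | inl i, inr j | inr i, inl j => if i == j then 3 else 1
  end.

Lemma crown_dist_le3 u v : crown_dist u v <= 3.
Proof. by case: u v => i [] j /=; case: (i == j). Qed.

Lemma crown_sphere_size v l :
  \sum_(u : T) (crown_dist u v == l : nat) =
    (l \in [:: 0; 3]) + n.-1 * (l \in [:: 1; 2]).
Proof.
rewrite big_sumType; case: v => i /=; rewrite !sum_ord_if_eq !inE.
all: by case: l => [|[|[|[|l]]]]; rewrite /= ?muln0 ?muln1 ?addn0.
Qed.

Lemma crown_dist_le_walk u v m : walk_len e u v m -> crown_dist u v <= m.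
Proof.
case=> p [<- walk_p <-].
case: p walk_p => [|x [|y [|z p]]] /=.
- by case: u => i /=; rewrite eqxx.
- rewrite andbT; case: u x => i [] j //= /negPf.
  + by move->.
  + by rewrite eq_sym => ->.
- by rewrite andbT; case: u x y => i [] j [] k; rewrite /= ?andbF // => _; case: ifP.
- by move=> _; exact: leq_trans (crown_dist_le3 _ _) _.
Qed.

Hypothesis n_ge3 : 3 <= n.

Lemma walk_len_crown_dist u v : walk_len e u v (crown_dist u v).
Proof.
have ord_gt2 : 2 < #|'I_n| by rewrite card_ord.
case: u v => i [] j /=; case: eqP => [<-|/eqP ij].
- by exists [::].
- have [k /andP[ki kj]] := exists_neq2 i j ord_gt2.
  by exists [:: inr k; inl j]; rewrite /= (eq_sym i) (eq_sym j) ki kj.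
- have [k /andP[ki _]] := exists_neq2 i i ord_gt2.
  have [m /andP[mi mk]] := exists_neq2 i k ord_gt2.
  by exists [:: inr k; inl m; inr i]; rewrite /= (eq_sym i) ki mk mi.
- by exists [:: inr j]; rewrite /= ij.
- have [k /andP[ki _]] := exists_neq2 i i ord_gt2.
  have [m /andP[mi mk]] := exists_neq2 i k ord_gt2.
  by exists [:: inl k; inr m; inl i]; rewrite /= (eq_sym k m) (eq_sym i m) ki mk mi.
- by exists [:: inl j]; rewrite /= eq_sym ij.
- by exists [::].
- have [k /andP[ki kj]] := exists_neq2 i j ord_gt2.
  by exists [:: inl k; inr j]; rewrite /= ki kj.
Qed.

Lemma dominates_crown v l u : dominates e v l u <-> crown_dist u v = l.
Proof.
exact: dist_eq_iff (walk_len_crown_dist u v) (@crown_dist_le_walk u v) l.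
Qed.

Lemma crown_ext_irr_dom_card_ge4 (S : {set T}) (lam : T -> nat) :
  ext_irr_dom e S lam -> 4 <= #|S|.
Proof.
case=> lam_inj _ cover.
have cover_sum : #|T| <= \sum_(v in S) \sum_(u : T) (crown_dist u v == lam v : nat).
  apply: (card_le_sum_cover (R := fun v u => crown_dist u v == lam v)) => u.
  by have [v vS /dominates_crown duv] := cover u; exists v; rewrite //= duv.
have sphere_le : \sum_(v in S) \sum_(u : T) (crown_dist u v == lam v : nat) <=
    \sum_(v in S) (1 + (n - 2) * (lam v \in [:: 1; 2])).
  apply: leq_sum => v _; rewrite crown_sphere_size !inE.
  by case: (lam v) => [|[|[|[|l]]]] /=; lia.
move: (leq_trans cover_sum sphere_le).
rewrite card_sum card_ord big_split /= sum1_card -big_distrr /=.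
have /= := leq_mul (leqnn (n - 2)) (sum_labels_in_le [:: 1; 2] lam_inj).
(* the two occurrences of [#|S|] differ in their finType instance, which lia
   would treat as distinct atoms *)
set s := #|S|; lia.
Qed.

Let o0 : 'I_n := Ordinal (leq_trans (isT : 1 <= 3) n_ge3).
Let o1 : 'I_n := Ordinal (leq_trans (isT : 2 <= 3) n_ge3).

Definition crown_dom_set : {set T} := [set x in [:: inl o0; inr o0; inr o1; inl o1]].

Definition crown_dom_label (v : T) : nat :=
  match v with
  | inl i => if i == o0 then 0 else 3
  | inr i => if i == o0 then 1 else 2
  end.

Lemma card_crown_dom_set : #|crown_dom_set| <= 4.
Proof. by rewrite cardsE (leq_trans (card_size _)). Qed.

Lemma crown_dom_ext_irr_dom : ext_irr_dom e crown_dom_set crown_dom_label.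
Proof.
split.
- by move=> x y; rewrite !inE => /or4P[]/eqP-> /or4P[]/eqP->.
- by exists (inl o0); rewrite ?inE.
- case=> i.
  + have [->|i0] := eqVneq i o0.
      by exists (inl o0); rewrite ?inE // dominates_crown.
    by exists (inr o0); rewrite ?inE // dominates_crown /= (negPf i0).
  + have [->|i1] := eqVneq i o1.
      by exists (inl o1); rewrite ?inE // dominates_crown.
    by exists (inr o1); rewrite ?inE // dominates_crown /= (negPf i1).
Qed.

End Crown.

Theorem proposition3p2 (n : nat) : 3 <= n ->
  exists (S : {set crown_vertex n}) (lam : crown_vertex n -> nat),
    optimal_ext_irr_dom (@crown_adj n) S lam.
Proof.
move=> n_ge3; exists (crown_dom_set n_ge3), (crown_dom_label n_ge3).
split; first exact: crown_dom_ext_irr_dom.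
move=> S lam /(crown_ext_irr_dom_card_ge4 n_ge3).
exact: leq_trans (card_crown_dom_set n_ge3).
Qed.
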